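(* Let $\phi:A\to B$ be a surjective ring homomorphism. If $A$ is a Prüfer ring and $\mathrm{Ker}(\phi)$ is a regular ideal of $A$, then $\mathfrak a(\mathfrak b\cap\mathfrak c)=\mathfrak a\mathfrak b\cap\mathfrak a\mathfrak c$ for all ideals $\mathfrak a,\mathfrak b,\mathfrak c$ of $B$. In particular, $B$ is a Prüfer ring.
   Context: All rings are commutative with identity. An ideal is regular if it contains a non-zerodivisor. A ring is a Prüfer ring if every regular finitely generated ideal is invertible. *)

(* Commutative rings with identity (possibly the zero ring):
   comPzRingType. Ideals are represented as predicates R -> Prop. *)
From HB Require Import structures.
From mathcomp Require Import all_boot all_order all_algebra.
Set Implicit Arguments. Unset Strict Implicit. Unset Printing Implicit Defensive.
Import GRing.Theory.
Local Open Scope ring_scope.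

Section IdealDefs.
Variable R : comPzRingType.

Definition is_ideal (I : R -> Prop) : Prop :=
  [/\ I 0, (forall x y, I x -> I y -> I (x + y))
         & (forall r x, I x -> I (r * x))].

Definition ideal_mul (I J : R -> Prop) : R -> Prop :=
  fun x => exists (n : nat) (a b : 'I_n -> R),
    [/\ (forall k, I (a k)), (forall k, J (b k)) & x = \sum_(k < n) a k * b k].

Definition ideal_cap (I J : R -> Prop) : R -> Prop := fun x => I x /\ J x.

Definition ideal_eq (I J : R -> Prop) : Prop := forall x, I x <-> J x.

Definition regular_elt (x : R) : Prop := forall y, x * y = 0 -> y = 0.

Definition regular_ideal (I : R -> Prop) : Prop := exists x, I x /\ regular_elt x.

Definition fin_gen (I : R -> Prop) : Prop :=
  exists (n : nat) (g : 'I_n -> R),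
    forall x, I x <-> exists c : 'I_n -> R, x = \sum_(k < n) c k * g k.

(* Invertibility: I (R : I) = R in the total ring of fractions Q(R), where
   (R : I) = { q in Q(R) | q I ⊆ R }.  Written out inside R: an element of
   (R : I) is a fraction a/s with s regular and s | a*j for all j in I; since
   I (R : I) ⊆ R always, I (R : I) = R iff 1 is a finite sum of products
   i_k * (a_k/s_k) with i_k in I, a_k/s_k in (R : I); each such product is the
   (unique, s_k regular) element r_k of R with s_k r_k = i_k a_k. *)
Definition invertible_ideal (I : R -> Prop) : Prop :=
  exists (n : nat) (i a s r : 'I_n -> R),
    [/\ (forall k, I (i k)),
        (forall k, regular_elt (s k)),
        (forall k j, I j -> exists t, a k * j = s k * t),
        (forall k, s k * r k = i k * a k)
      & \sum_(k < n) r k = 1].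

Definition prufer : Prop :=
  forall I : R -> Prop, is_ideal I -> fin_gen I -> regular_ideal I ->
    invertible_ideal I.

End IdealDefs.

Definition ker (A B : comPzRingType) (phi : {rmorphism A -> B}) : A -> Prop :=
  fun x => phi x = 0.

(* Call a finite family g locally principal if there are e and a matrix T with
   e + \sum_l T_ll = 1, e g_j = 0 and T_lj g_m = T_lm g_j: on the basic open set
   of T_ll the ideal (g) is generated by g_l, and on that of e it vanishes.  An
   invertible (g) is locally principal with e = 0, the T_lj being read off from
   an expression 1 = \sum_k i_k (a_k/s_k).  For g in B, lift g to A and add a
   regular element s of Ker(phi); the enlarged family generates an invertible
   ideal of A, and its image in B, whose extra member is 0, shows that g is
   locally principal.  Applied to the generators of b and c this localizes
   a(b \cap c) = ab \cap ac to the case where b or c is principal; and a regular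
   element of (g) forces e = 0, so that T yields the inverse of (g). *)
From mathcomp Require Import all_boot all_order all_algebra.
Set Implicit Arguments. Unset Strict Implicit. Unset Printing Implicit Defensive.
Import GRing.Theory.
Local Open Scope ring_scope.

Definition cat_fam (T : Type) (p q : nat) (f : 'I_p -> T) (g : 'I_q -> T)
  (k : 'I_(p + q)) : T :=
  match split k with inl i => f i | inr j => g j end.

Lemma cat_famL (T : Type) p q (f : 'I_p -> T) (g : 'I_q -> T) i :
  cat_fam f g (lshift q i) = f i.
Proof. by rewrite /cat_fam (unsplitK (inl _ i)). Qed.

Lemma cat_famR (T : Type) p q (f : 'I_p -> T) (g : 'I_q -> T) j :
  cat_fam f g (rshift p j) = g j.
Proof. by rewrite /cat_fam (unsplitK (inr _ j)). Qed.

Lemma cat_fam_all (T : Type) (P : T -> Prop) p q (f : 'I_p -> T) (g : 'I_q -> T) :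
  (forall i, P (f i)) -> (forall j, P (g j)) -> forall k, P (cat_fam f g k).
Proof. by move=> Pf Pg k; rewrite /cat_fam; case: split. Qed.

Section Ideals.
Variable R : comPzRingType.
Implicit Types (I J : R -> Prop) (x : R).

Lemma regular_mulI x : regular_elt x -> injective ( *%R x).
Proof.
move=> rx a b e; apply/eqP; rewrite -subr_eq0; apply/eqP; apply: rx.
by rewrite mulrBr e subrr.
Qed.

Lemma ideal_mul0 I J : ideal_mul I J 0.
Proof. by exists 0%N, (fun _ => 0), (fun _ => 0); split; rewrite ?big_ord0 //; case. Qed.

Lemma ideal_mulD I J x y :
  ideal_mul I J x -> ideal_mul I J y -> ideal_mul I J (x + y).
Proof.
move=> [n [a [b [Ia Jb ->]]]] [m [a' [b' [Ia' Jb' ->]]]].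
exists (n + m)%N, (cat_fam a a'), (cat_fam b b'); split; try exact: cat_fam_all.
rewrite big_split_ord /=.
by congr (_ + _); apply: eq_bigr => i _; rewrite ?cat_famL ?cat_famR.
Qed.

Lemma ideal_mul_sum I J n (F : 'I_n -> R) :
  (forall k, ideal_mul I J (F k)) -> ideal_mul I J (\sum_(k < n) F k).
Proof.
by move=> H; apply: (big_ind (ideal_mul I J)) => //; [apply: ideal_mul0 | apply: ideal_mulD].
Qed.

Lemma ideal_mul_scale I J t n (a b : 'I_n -> R) :
  (forall k, I (a k)) -> (forall k, J (t * b k)) ->
  ideal_mul I J (t * \sum_(k < n) a k * b k).
Proof.
move=> Ia Jtb; exists n, a, (fun k => t * b k); split => //.
by rewrite mulr_sumr; apply: eq_bigr => k _; rewrite mulrCA.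
Qed.

Definition span n (g : 'I_n -> R) : R -> Prop :=
  fun x => exists c : 'I_n -> R, x = \sum_(k < n) c k * g k.

Lemma span_ideal n (g : 'I_n -> R) : is_ideal (span g).
Proof.
split.
- by exists (fun _ => 0); rewrite big1 // => k _; rewrite mul0r.
- move=> _ _ [c ->] [d ->]; exists (fun k => c k + d k).
  by rewrite -big_split /=; apply: eq_bigr => k _; rewrite mulrDl.
- move=> r _ [c ->]; exists (fun k => r * c k).
  by rewrite mulr_sumr; apply: eq_bigr => k _; rewrite mulrA.
Qed.

Lemma span_gen n (g : 'I_n -> R) l : span g (g l).
Proof.
exists (fun k => (k == l)%:R).
rewrite (bigD1 l) //= eqxx mul1r big1 ?addr0 // => k /negbTE ->.
by rewrite mul0r.
Qed.

Definition locally_principal n (g : 'I_n -> R) : Prop :=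
  exists (e : R) (T : 'I_n -> 'I_n -> R),
    [/\ e + \sum_(l < n) T l l = 1, (forall j, e * g j = 0)
      & (forall l j m, T l j * g m = T l m * g j)].

Lemma eq_locally_principal n (g g' : 'I_n -> R) :
  g =1 g' -> locally_principal g -> locally_principal g'.
Proof.
move=> eqg [e [T [sumT eg Trel]]]; exists e, T.
by split=> // [j | l j m]; rewrite -!eqg.
Qed.

Lemma invertible_span_locally_principal n (g : 'I_n -> R) :
  invertible_ideal (span g) -> locally_principal g.
Proof.
move=> [N [i [a [s [r [Ii rs Ia sr sum_r]]]]]].
have [c Ec] : exists c : 'I_N -> 'I_n -> R,
    forall k, i k = \sum_(l < n) c k l * g l.
  apply: (@fin_all_exists _ (fun=> 'I_n -> R)
    (fun k c => i k = \sum_(l < n) c l * g l)) => k.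
  by have [c ->] := Ii k; exists c.
have [t Et] : exists t : 'I_N -> 'I_n -> R,
    forall k l, a k * g l = s k * t k l.
  apply: (@fin_all_exists _ (fun=> 'I_n -> R)
    (fun k t => forall l, a k * g l = s k * t l)) => k.
  apply: (@fin_all_exists _ (fun=> R) (fun l t => a k * g l = s k * t)) => l.
  exact: Ia (span_gen g l).
have t_rel k l j : t k l * g j = t k j * g l.
  by apply: (regular_mulI (rs k)); rewrite !mulrA -!Et mulrAC.
have Er k : r k = \sum_(l < n) c k l * t k l.
  apply: (regular_mulI (rs k)); rewrite sr Ec mulr_suml mulr_sumr.
  by apply: eq_bigr => l _; rewrite -mulrA (mulrC (g l)) Et mulrCA.
exists 0, (fun l j => \sum_(k < N) c k l * t k j); split.
- rewrite add0r exchange_big /= -sum_r.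
  by apply: eq_bigr => k _; rewrite Er.
- by move=> j; rewrite mul0r.
- move=> l j m; rewrite !mulr_suml; apply: eq_bigr => k _.
  by rewrite -!mulrA t_rel.
Qed.

Lemma prufer_locally_principal n (g : 'I_n -> R) :
  prufer R -> regular_ideal (span g) -> locally_principal g.
Proof.
move=> PR rg; apply: invertible_span_locally_principal.
by apply: PR => //; [apply: span_ideal | exists n, g].
Qed.

Lemma locally_principal_cat0 p n (g : 'I_n -> R) :
  locally_principal (cat_fam (fun _ : 'I_p => 0) g) -> locally_principal g.
Proof.
move=> [e [T [sumT eg Trel]]].
have T_ann i j : T (lshift n i) (lshift n i) * g j = 0.
  by rewrite -(cat_famR (fun _ : 'I_p => 0) g) Trel cat_famL mulr0.
exists (e + \sum_(i < p) T (lshift n i) (lshift n i)),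
       (fun l j => T (rshift p l) (rshift p j)); split.
- by rewrite -sumT big_split_ord addrA.
- move=> j; rewrite mulrDl mulr_suml big1 ?addr0 => [|i _]; last exact: T_ann.
  by rewrite -(cat_famR (fun _ : 'I_p => 0) g) eg.
- by move=> l j m; rewrite -!(cat_famR (fun _ : 'I_p => 0) g) Trel.
Qed.

Lemma locally_principal_distr (a b c : R -> Prop) :
  (forall n (g : 'I_n -> R), locally_principal g) ->
  is_ideal b -> is_ideal c ->
  ideal_eq (ideal_mul a (ideal_cap b c))
           (ideal_cap (ideal_mul a b) (ideal_mul a c)).
Proof.
move=> LP [_ _ bM] [_ _ cM] z; split.
  by case=> [n [x [w [ax bcw ->]]]]; split; exists n, x, w;
    split => // k; case: (bcw k).
case=> [[p [al [be [aal bbe Ez1]]]] [q [al' [ga [aal' cga Ez2]]]]].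
have [e [T [sumT eg Trel]]] := LP _ (cat_fam be ga).
have ez : e * z = 0.
  rewrite Ez1 mulr_sumr big1 // => i _.
  by rewrite mulrCA -(cat_famL be ga) eg mulr0.
rewrite -[z]mul1r -sumT mulrDl ez add0r mulr_suml big_split_ord /=.
apply: ideal_mulD; apply: ideal_mul_sum => l.
- rewrite Ez2; apply: ideal_mul_scale => // j; split; last exact: cM.
  by rewrite -(cat_famR be ga) Trel cat_famL; apply: bM.
- rewrite Ez1; apply: ideal_mul_scale => // i; split; first exact: bM.
  by rewrite -(cat_famL be ga) Trel cat_famR; apply: cM.
Qed.

Lemma locally_principal_invertible I n (g : 'I_n -> R) :
  (forall x, I x <-> span g x) -> locally_principal g -> regular_ideal I ->
  invertible_ideal I.
Proof.
move=> Ig [e [T [sumT eg Trel]]] [x [Ix rx]].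
have [c Ex] := (Ig x).1 Ix.
have e0 : e = 0.
  apply: rx; rewrite mulrC Ex mulr_sumr big1 // => j _.
  by rewrite mulrCA eg mulr0.
pose a l := \sum_(j < n) c j * T l j.
have ag l m : a l * g m = x * T l m.
  rewrite Ex mulr_suml mulrC mulr_sumr; apply: eq_bigr => j _.
  by rewrite -mulrA Trel mulrCA.
exists n, g, a, (fun _ => x), (fun l => T l l); split => //.
- by move=> k; apply/Ig/span_gen.
- move=> l _ /Ig [d ->]; exists (\sum_(m < n) d m * T l m).
  rewrite !mulr_sumr; apply: eq_bigr => m _.
  by rewrite mulrCA ag mulrCA.
- by move=> l; rewrite [RHS]mulrC ag.
- by rewrite -sumT e0 add0r.
Qed.

End Ideals.

Lemma locally_principal_rmorph (A B : comPzRingType) (phi : {rmorphism A -> B})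
    n (g : 'I_n -> A) :
  locally_principal g -> locally_principal (fun k => phi (g k)).
Proof.
move=> [e [T [sumT eg Trel]]].
exists (phi e), (fun l j => phi (T l j)); split.
- by rewrite -rmorph_sum -rmorphD sumT rmorph1.
- by move=> j; rewrite -rmorphM eg rmorph0.
- by move=> l j m; rewrite -!rmorphM Trel.
Qed.

Lemma surjective_locally_principal (A B : comPzRingType)
    (phi : {rmorphism A -> B}) :
  (forall y : B, exists x : A, phi x = y) -> prufer A ->
  regular_ideal (ker phi) ->
  forall n (g : 'I_n -> B), locally_principal g.
Proof.
move=> phi_surj PA [s [Ks rs]] n g.
have [y Ey] : exists y : 'I_n -> A, forall j, phi (y j) = g j.
  exact: (@fin_all_exists _ (fun=> A) (fun j x => phi x = g j)).
have LPA : locally_principal (cat_fam (fun _ : 'I_1 => s) y).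
  apply: prufer_locally_principal => //.
  exists s; split => //.
  by have := span_gen (cat_fam (fun _ : 'I_1 => s) y) (lshift n ord0); rewrite cat_famL.
apply: (@locally_principal_cat0 _ 1).
apply: eq_locally_principal (locally_principal_rmorph phi LPA) => k.
by rewrite /cat_fam; case: split => j; rewrite ?Ey.
Qed.

Theorem proposition4p4 (A B : comPzRingType) (phi : {rmorphism A -> B}) :
  (forall y : B, exists x : A, phi x = y) ->
  prufer A ->
  regular_ideal (ker phi) ->
  (forall a b c : B -> Prop, is_ideal a -> is_ideal b -> is_ideal c ->
     ideal_eq (ideal_mul a (ideal_cap b c))
              (ideal_cap (ideal_mul a b) (ideal_mul a c)))
  /\ prufer B.
Proof.
move=> phi_surj PA rK.
have LP := surjective_locally_principal phi_surj PA rK.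
split=> [a b c _ Ib Ic | I _ [n [g Ig]] rI].
  exact: locally_principal_distr.
exact: (locally_principal_invertible Ig).
Qed.
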